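(* Let $A$ be a general metric space and $M$ a left module on $A$. Then for every $x\in A$, $$M(x)\ \le\ \sup_{\epsilon>0}\ \inf\{A(x,y): y\in A,\ M(y)\le\epsilon\}.$$ If moreover $M$ is $\mathcal P_1$-flat, this is an equality for every $x$, i.e. $M=M^-(\mathcal F(M))$.
   Context: $[0,\infty]$ with $+$ ($x+\infty=\infty$), internal hom $[x,y]=\max(y-x,0)$ for finite $x,y$, $[x,\infty]=\infty$ for $x<\infty$, $[\infty,y]=0$; $\inf\emptyset=\infty$, $\sup\emptyset=0$. A general metric space $A$ is a set with $A(-,-):A\times A\to[0,\infty]$, $A(x,x)=0$, $A(x,z)\le A(x,y)+A(y,z)$. A left module is $M:A\to[0,\infty]$ with $M(x)\le M(y)+A(x,y)$; a right module is $N:A\to[0,\infty]$ with $N(y)\le A(x,y)+N(x)$. A left module $M$ is $\mathcal P_1$-flat iff $\inf_xM(x)=0$ and for every $v\in[0,\infty]$ and every right module $N$, $\inf_x(M(x)+[v,N(x)])=[v,\inf_x(M(x)+N(x))]$. $\mathcal F(M)$ is the set of subsets of $A$ containing some $\{y:M(y)\le\epsilon\}$, $\epsilon>0$, and for a filter $\mathcal F$, $M^-(\mathcal F)(x)=\sup_{f\in\mathcal F}\inf_{y\in f}A(x,y)$. *)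

(* [0,oo] is modelled inside \bar R (R : realType)
   by requiring all values to be nonnegative. *)
From mathcomp Require Import all_boot all_order all_algebra.
From mathcomp Require Import all_classical all_reals.
From mathcomp Require Import ereal.
Set Implicit Arguments. Unset Strict Implicit. Unset Printing Implicit Defensive.
Import Order.TTheory GRing.Theory Num.Theory.
Local Open Scope classical_set_scope.
Local Open Scope ereal_scope.

Section Defs.
Variable R : realType.

Definition gen_metric (A : Type) (d : A -> A -> \bar R) : Prop :=
  [/\ (forall x y, 0 <= d x y), (forall x, d x x = 0) &
      (forall x y z, d x z <= d x y + d y z)].

Definition left_module (A : Type) (d : A -> A -> \bar R) (M : A -> \bar R) : Prop :=
  (forall x, 0 <= M x) /\ (forall x y, M x <= M y + d x y).

Definition right_module (A : Type) (d : A -> A -> \bar R) (N : A -> \bar R) : Prop :=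
  (forall x, 0 <= N x) /\ (forall x y, N y <= d x y + N x).

(* internal hom [x,y] of [0,oo] (only used on nonnegative values) *)
Definition ehom (v w : \bar R) : \bar R :=
  match v, w with
  | +oo, _ => 0
  | _, +oo => +oo
  | r%:E, s%:E => (Num.max (s - r) 0)%R%:E
  | _, _ => 0
  end.

Definition P1_flat (A : Type) (d : A -> A -> \bar R) (M : A -> \bar R) : Prop :=
  ereal_inf (range M) = 0 /\
  forall (v : \bar R), 0 <= v -> forall N : A -> \bar R, right_module d N ->
    ereal_inf [set M x + ehom v (N x) | x in [set: A]] =
    ehom v (ereal_inf [set M x + N x | x in [set: A]]).

Definition filter_of (A : Type) (M : A -> \bar R) : set (set A) :=
  [set f | exists2 e : R, (0 < e)%R & [set y | M y <= e%:E] `<=` f].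

Definition Mminus (A : Type) (d : A -> A -> \bar R) (F : set (set A)) (x : A) : \bar R :=
  ereal_sup [set ereal_inf [set d x y | y in f] | f in F].

Definition sup_inf_bound (A : Type) (d : A -> A -> \bar R) (M : A -> \bar R) (x : A) : \bar R :=
  ereal_sup [set ereal_inf [set d x y | y in [set y | M y <= e%:E]] | e in [set e : R | (0 < e)%R]].

End Defs.

From mathcomp Require Import all_boot all_order all_algebra.
From mathcomp Require Import all_classical all_reals.
From mathcomp Require Import ereal.
Import Order.TTheory GRing.Theory Num.Theory.
Local Open Scope classical_set_scope.
Local Open Scope ereal_scope.

(* The left-module inequality [M x <= M y + A(x,y)] gives
   [M x <= e + inf {A(x,y) : M y <= e}] for every [e > 0], hence the upper
   bound.  For the converse, [y |-> A(x,y)] is a right module and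
   [inf_y (M y + A(x,y)) = M x], so flatness with [v := M x] yields
   [inf_y (M y + [M x, A(x,y)]) = [M x, M x] = 0]: there are points [y] with
   [M y] and [A(x,y) - M x] both arbitrarily small. *)

Section InternalHom.
Context {R : realType}.
Implicit Types v w : \bar R.

Lemma ehom_ge0 v w : 0 <= ehom v w.
Proof. by case: v w => [r| |] [s| |] //=; rewrite lee_fin le_max lexx orbT. Qed.

Lemma ehomvv v : ehom v v = 0.
Proof. by case: v => [r| |] //=; rewrite subrr maxxx. Qed.

Lemma le_addr_ehom w v : v != -oo -> w <= v + ehom v w.
Proof.
case: v w => [r| |] [s| |] //= _; rewrite ?leey ?leNye //.
by rewrite -EFinD lee_fin -lerBlDl le_max lexx.
Qed.

End InternalHom.

Section LeftModule.
Variables (R : realType) (A : Type) (d : A -> A -> \bar R) (M : A -> \bar R).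

Definition dist_to_sublevel (x : A) (e : R) : \bar R :=
  ereal_inf [set d x y | y in [set y | M y <= e%:E]].

Lemma dist_to_sublevel_le_sup_inf_bound x e :
  (0 < e)%R -> dist_to_sublevel x e <= sup_inf_bound d M x.
Proof. by move=> e0; apply: ereal_sup_ubound; exists e. Qed.

Lemma Mminus_filter_of x : Mminus d (filter_of M) x = sup_inf_bound d M x.
Proof.
apply/le_anti/andP; split; apply: ge_ereal_sup.
- move=> _ [f [e e0 sub] <-].
  apply: (le_trans (y := dist_to_sublevel x e)); last first.
    exact: dist_to_sublevel_le_sup_inf_bound.
  exact/ereal_inf_le_tmp/image_subset.
- move=> _ [e e0 <-]; apply: ereal_sup_ubound.
  by exists [set y | M y <= e%:E] => //; exists e.
Qed.

Hypothesis M_left : left_module d M.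

Lemma left_module_le_dist_to_sublevel x e :
  M x <= dist_to_sublevel x e + e%:E.
Proof.
rewrite -leeBlDr // /dist_to_sublevel; apply: le_ereal_inf_tmp => _ [y My <-].
rewrite leeBlDr // addeC; apply: le_trans (M_left.2 x y) _.
exact: leeD2r.
Qed.

Lemma left_module_le_sup_inf_bound x : M x <= sup_inf_bound d M x.
Proof.
apply/lee_addgt0Pr => e e0; apply: le_trans (left_module_le_dist_to_sublevel x e) _.
exact/leeD2r/dist_to_sublevel_le_sup_inf_bound.
Qed.

Hypothesis d_metric : gen_metric d.

Lemma right_module_dist x : right_module d (d x).
Proof.
case: d_metric => d0 _ dtri; split=> // y z.
by rewrite addeC; apply: dtri.
Qed.

Lemma inf_add_dist x : ereal_inf [set M y + d x y | y in [set: A]] = M x.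
Proof.
case: d_metric => _ dxx _.
apply/le_anti/andP; split.
- by apply: ge_ereal_inf; exists (M x + d x x) => //; rewrite dxx adde0.
- by apply: le_ereal_inf_tmp => _ [y _ <-]; apply: M_left.2.
Qed.

Hypothesis M_flat : P1_flat d M.

Lemma P1_flat_exists_near x e :
  (0 < e)%R -> exists y, M y + ehom (M x) (d x y) < e%:E.
Proof.
move=> e0; have := M_flat.2 (M x) (M_left.1 x) (d x) (right_module_dist x).
rewrite inf_add_dist ehomvv => inf0.
have : ereal_inf [set M y + ehom (M x) (d x y) | y in [set: A]] < e%:E.
  by rewrite inf0 lte_fin.
by case/ereal_inf_lt => _ [y _ <-]; exists y.
Qed.

Lemma P1_flat_dist_to_sublevel_le x e :
  (0 < e)%R -> dist_to_sublevel x e <= M x.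
Proof.
move=> e0; apply/lee_addgt0Pr => t t0.
have [y lt_ymin] : exists y, M y + ehom (M x) (d x y) < (Num.min e t)%:E.
  by apply: P1_flat_exists_near; rewrite lt_min e0 t0.
have min_le_e : (Num.min e t <= e)%R by rewrite ge_min lexx.
have min_le_t : (Num.min e t <= t)%R by rewrite ge_min lexx orbT.
have My_le : M y <= e%:E.
  apply: le_trans (leeDl _ (ehom_ge0 _ _)) (le_trans (ltW lt_ymin) _).
  by rewrite lee_fin.
have hom_le : ehom (M x) (d x y) <= t%:E.
  apply: le_trans (leeDr _ (M_left.1 y)) (le_trans (ltW lt_ymin) _).
  by rewrite lee_fin.
apply: ge_ereal_inf; exists (d x y); first by exists y.
have Mx_neq : M x != -oo by apply: contraTneq (M_left.1 x) => ->.
apply: (le_trans (y := M x + ehom (M x) (d x y))); first exact: le_addr_ehom.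
exact: leeD2l.
Qed.

Lemma P1_flat_sup_inf_bound x : sup_inf_bound d M x = M x.
Proof.
apply/le_anti/andP; split; last exact: left_module_le_sup_inf_bound.
by apply: ge_ereal_sup => _ [e e0 <-]; apply: P1_flat_dist_to_sublevel_le.
Qed.

End LeftModule.

Theorem mainTheorem11 (R : realType) (A : Type) (d : A -> A -> \bar R)
  (M : A -> \bar R) :
  gen_metric d -> left_module d M ->
  (forall x, M x <= sup_inf_bound d M x) /\
  (P1_flat d M ->
     (forall x, M x = sup_inf_bound d M x) /\ M = Mminus d (filter_of M)).
Proof.
move=> d_metric M_left; split=> [|M_flat]; first exact: left_module_le_sup_inf_bound.
have M_eq x : M x = sup_inf_bound d M x by rewrite P1_flat_sup_inf_bound.
split=> //; apply: boolp.funext => x.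
by rewrite Mminus_filter_of M_eq.
Qed.
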